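(* Let $q\in\mathbb C$ with $|q|=1$ and $q^2\neq 1$, and let $A,B$ be self-adjoint operators on a Hilbert space $\mathcal H$. Suppose $\lambda,\lambda q\in\rho(A)$ and $\mu,\mu q\in\rho(B)$. (i) If $\mathcal D\subseteq\mathcal D(AB)\cap\mathcal D(BA)$ is a linear subspace with $ABf=qBAf$ for all $f\in\mathcal D$, then $\mathcal E:=(B-\mu qI)\mathcal D$ is a linear subspace of $\mathcal D(A)$ and $$R_\mu(B)Ag=qAR_{\mu q}(B)g\qquad(\dagger)$$ for all $g\in\mathcal E$ (in particular $R_{\mu q}(B)g\in\mathcal D(A)$). (ii) If $\mathcal E$ is a linear subspace of $\mathcal D(A)$ such that $R_{\mu q}(B)g\in\mathcal D(A)$ and $(\dagger)$ holds for all $g\in\mathcal E$, then every $f\in\mathcal D:=R_{\mu q}(B)\mathcal E$ lies in $\mathcal D(AB)\cap\mathcal D(BA)$ and satisfies $ABf=qBAf$. (iii) If $\mathcal E$ is a linear subspace of $\mathcal D(A)$ and $(\dagger)$ holds for all $g\in\mathcal E$, then $$R_\lambda(A)R_\mu(B)h=qR_{\mu q}(B)R_{\lambda q}(A)h+\mu\lambda q(q-1)R_\lambda(A)R_\mu(B)R_{\mu q}(B)R_{\lambda q}(A)h\qquad(\dagger\dagger)$$ for all $h\in\mathcal F:=(A-\lambda qI)\mathcal E$. (iv) If $(\dagger\dagger)$ holds for all $h$ in a linear subspace $\mathcal F\subseteq\mathcal H$, then $(\dagger)$ holds (with $R_{\mu q}(B)g\in\mathcal D(A)$) for all $g\in\mathcal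 E:=R_{\lambda q}(A)\mathcal F$.
   Context: For a densely defined closed operator $T$, $\mathcal D(T)$ denotes its domain, $\rho(T)$ its resolvent set and $R_\lambda(T)=(T-\lambda I)^{-1}$ its resolvent. Products of unbounded operators have their natural domains. *)

From Stdlib Require Import Reals ClassicalEpsilon.
Open Scope R_scope.

Record CC : Type := mkC { Re : R; Im : R }.
Definition Czero : CC := mkC 0 0.
Definition Cone : CC := mkC 1 0.
Definition Cadd (a b : CC) : CC := mkC (Re a + Re b) (Im a + Im b).
Definition Copp (a : CC) : CC := mkC (- Re a) (- Im a).
Definition Csub (a b : CC) : CC := Cadd a (Copp b).
Definition Cmul (a b : CC) : CC :=
  mkC (Re a * Re b - Im a * Im b) (Re a * Im b + Im a * Re b).
Definition Cconj (a : CC) : CC := mkC (Re a) (- Im a).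
Definition Cabs (a : CC) : R := sqrt (Re a * Re a + Im a * Im a).

(** * Complex Hilbert spaces (inner product linear in the first argument) *)
Record HilbertSpace : Type := {
  hcar :> Type;
  hzero : hcar;
  hadd : hcar -> hcar -> hcar;
  hopp : hcar -> hcar;
  hscal : CC -> hcar -> hcar;
  hinner : hcar -> hcar -> CC;
  hadd_assoc : forall x y z, hadd x (hadd y z) = hadd (hadd x y) z;
  hadd_comm : forall x y, hadd x y = hadd y x;
  hadd_zero : forall x, hadd x hzero = x;
  hadd_opp : forall x, hadd x (hopp x) = hzero;
  hscal_one : forall x, hscal Cone x = x;
  hscal_assoc : forall a b x, hscal a (hscal b x) = hscal (Cmul a b) x;
  hscal_distr_v : forall a x y, hscal a (hadd x y) = hadd (hscal a x) (hscal a y);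
  hscal_distr_s : forall a b x, hscal (Cadd a b) x = hadd (hscal a x) (hscal b x);
  hinner_add_l : forall x y z, hinner (hadd x y) z = Cadd (hinner x z) (hinner y z);
  hinner_scal_l : forall a x y, hinner (hscal a x) y = Cmul a (hinner x y);
  hinner_conj : forall x y, hinner y x = Cconj (hinner x y);
  hinner_pos : forall x, 0 <= Re (hinner x x);
  hinner_def : forall x, hinner x x = Czero -> x = hzero;
  hcomplete : forall u : nat -> hcar,
    (forall eps, 0 < eps -> exists N, forall m n, (N <= m)%nat -> (N <= n)%nat ->
        sqrt (Re (hinner (hadd (u m) (hopp (u n))) (hadd (u m) (hopp (u n))))) < eps) ->
    exists l, forall eps, 0 < eps -> exists N, forall n, (N <= n)%nat ->
        sqrt (Re (hinner (hadd (u n) (hopp l)) (hadd (u n) (hopp l)))) < eps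
}.

Arguments hzero {h}.
Arguments hadd {h}.
Arguments hopp {h}.
Arguments hscal {h}.
Arguments hinner {h}.

Definition hsub {H : HilbertSpace} (x y : H) : H := hadd x (hopp y).
Definition hnorm {H : HilbertSpace} (x : H) : R := sqrt (Re (hinner x x)).

Definition is_subspace {H : HilbertSpace} (S : H -> Prop) : Prop :=
  S hzero /\ (forall x y, S x -> S y -> S (hadd x y)) /\
  (forall a x, S x -> S (hscal a x)).

(** * (Possibly unbounded) operators: a domain and an action on it.
    The value of [op_app] outside [op_dom] is irrelevant. *)
Record Op (H : HilbertSpace) : Type := { op_dom : H -> Prop; op_app : H -> H }.
Arguments op_dom {H}.
Arguments op_app {H}.

Definition is_linear_op {H : HilbertSpace} (T : Op H) : Prop :=
  is_subspace (op_dom T) /\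
  (forall x y, op_dom T x -> op_dom T y ->
     op_app T (hadd x y) = hadd (op_app T x) (op_app T y)) /\
  (forall a x, op_dom T x -> op_app T (hscal a x) = hscal a (op_app T x)).

Definition densely_defined {H : HilbertSpace} (T : Op H) : Prop :=
  forall x eps, 0 < eps -> exists y, op_dom T y /\ hnorm (hsub x y) < eps.

Definition adj_dom {H : HilbertSpace} (T : Op H) (y : H) : Prop :=
  exists z, forall x, op_dom T x -> hinner (op_app T x) y = hinner x z.

(** Self-adjoint: densely defined linear operator with T = T-adjoint, i.e.
    D(adj T) = D(T) and (adj T) y = T y for y in D(T). *)
Definition self_adjoint {H : HilbertSpace} (T : Op H) : Prop :=
  is_linear_op T /\ densely_defined T /\
  (forall y, adj_dom T y <-> op_dom T y) /\
  (forall x y, op_dom T x -> op_dom T y ->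
     hinner (op_app T x) y = hinner x (op_app T y)).

Definition shift {H : HilbertSpace} (T : Op H) (l : CC) (x : H) : H :=
  hsub (op_app T x) (hscal l x).

Definition in_resolvent_set {H : HilbertSpace} (T : Op H) (l : CC) : Prop :=
  (forall x y, op_dom T x -> op_dom T y -> shift T l x = shift T l y -> x = y) /\
  (forall h, exists x, op_dom T x /\ shift T l x = h) /\
  (exists M, forall x, op_dom T x -> hnorm x <= M * hnorm (shift T l x)).

(** Resolvent R_lambda(T) h = (T - lambda I)^{-1} h (meaningful for lambda in rho(T)). *)
Definition resolvent {H : HilbertSpace} (T : Op H) (l : CC) (h : H) : H :=
  epsilon (inhabits hzero) (fun x => op_dom T x /\ shift T l x = h).

Definition dom_prod {H : HilbertSpace} (S T : Op H) (f : H) : Prop :=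
  op_dom T f /\ op_dom S (op_app T f).

(** Relation (dagger): R_mu(B) A g = q A R_{mu q}(B) g, together with
    the requirement R_{mu q}(B) g in D(A) making the right side meaningful. *)
Definition dagger {H : HilbertSpace} (A B : Op H) (q mu : CC) (g : H) : Prop :=
  op_dom A (resolvent B (Cmul mu q) g) /\
  resolvent B mu (op_app A g) = hscal q (op_app A (resolvent B (Cmul mu q) g)).

Definition ddagger {H : HilbertSpace} (A B : Op H) (q lam mu : CC) (h : H) : Prop :=
  resolvent A lam (resolvent B mu h) =
  hadd (hscal q (resolvent B (Cmul mu q) (resolvent A (Cmul lam q) h)))
       (hscal (Cmul (Cmul mu lam) (Cmul q (Csub q Cone)))
          (resolvent A lam (resolvent B mu
             (resolvent B (Cmul mu q) (resolvent A (Cmul lam q) h))))).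

(* The argument is purely algebraic.  It uses only linearity of A and B, the
   characterisation of R_l(T) h as the unique x in D(T) with (T - l I) x = h,
   the first resolvent identity R_mu = R_{mu q} + (mu - mu q) R_mu R_{mu q},
   and invertibility of q (|q| = 1). *)
From Stdlib Require Import Reals Lra Lia List ClassicalEpsilon.
Open Scope R_scope.

Lemma Ceq (a b : CC) : Re a = Re b -> Im a = Im b -> a = b.
Proof. destruct a, b; simpl; intros; subst; reflexivity. Qed.

Ltac cring :=
  apply Ceq; cbn; unfold Czero, Cone, Cadd, Cmul, Copp, Csub, Cconj; simpl; ring.

Section VectorAlgebra.
Variable H : HilbertSpace.
Implicit Types x y z : H.

Lemma hadd_zero_l x : hadd hzero x = x.
Proof. rewrite hadd_comm; apply hadd_zero. Qed.

Lemma hadd_cancel_l x y z : hadd x y = hadd x z -> y = z.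
Proof.
  intro E.
  rewrite <- (hadd_zero_l y), <- (hadd_zero_l z), <- (hadd_opp H x),
    (hadd_comm H x (hopp x)), <- !hadd_assoc, E.
  reflexivity.
Qed.

Lemma hscal_zero x : hscal Czero x = hzero.
Proof.
  apply (hadd_cancel_l (hscal Czero x)).
  rewrite hadd_zero, <- hscal_distr_s; f_equal; cring.
Qed.

Lemma hopp_scal x : hopp x = hscal (Copp Cone) x.
Proof.
  apply (hadd_cancel_l x); rewrite hadd_opp, <- (hscal_zero x).
  rewrite <- (hscal_one H x) at 2; rewrite <- hscal_distr_s; f_equal; cring.
Qed.

Lemma hadd_swap_middle (a b c d : H) :
  hadd (hadd a b) (hadd c d) = hadd (hadd a c) (hadd b d).
Proof.
  rewrite <- !hadd_assoc; f_equal; rewrite !hadd_assoc; f_equal; apply hadd_comm.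
Qed.

Fixpoint lincomb (n : nat) (c : nat -> CC) (env : nat -> H) : H :=
  match n with
  | O => hzero
  | S n => hadd (lincomb n c env) (hscal (c n) (env n))
  end.

Lemma lincomb_ext n (c d : nat -> CC) env :
  (forall i, (i < n)%nat -> c i = d i) -> lincomb n c env = lincomb n d env.
Proof.
  induction n as [|n IHn]; intro E; simpl; [reflexivity|].
  rewrite IHn, E; [reflexivity | lia | intros i Hi; apply E; lia].
Qed.

Lemma lincomb_add n c d env :
  hadd (lincomb n c env) (lincomb n d env) = lincomb n (fun i => Cadd (c i) (d i)) env.
Proof.
  induction n; simpl; [apply hadd_zero|].
  rewrite hadd_swap_middle, IHn, hscal_distr_s; reflexivity.
Qed.

Lemma lincomb_scal n s c env :
  hscal s (lincomb n c env) = lincomb n (fun i => Cmul s (c i)) env.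
Proof.
  induction n; simpl.
  - rewrite <- (hscal_zero hzero), hscal_assoc; f_equal; cring.
  - rewrite hscal_distr_v, IHn, hscal_assoc; reflexivity.
Qed.

Lemma lincomb_opp n c env :
  hopp (lincomb n c env) = lincomb n (fun i => Copp (c i)) env.
Proof.
  rewrite hopp_scal, lincomb_scal; apply lincomb_ext; intros; cring.
Qed.

Lemma lincomb_zero n env : lincomb n (fun _ => Czero) env = hzero.
Proof. induction n; simpl; [|rewrite IHn, hscal_zero, hadd_zero]; reflexivity. Qed.

Lemma lincomb_atom n k env : (k < n)%nat ->
  env k = lincomb n (fun i => if Nat.eqb i k then Cone else Czero) env.
Proof.
  induction n as [|n IHn]; intro Hk; [lia|]; simpl.
  destruct (Nat.eqb_spec n k) as [->|Hne].
  - rewrite (lincomb_ext _ _ (fun _ => Czero)), lincomb_zero, hadd_zero_l, hscal_one.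
    + reflexivity.
    + intros i Hi; destruct (Nat.eqb_spec i k); [lia | reflexivity].
  - rewrite hscal_zero, hadd_zero; apply IHn; lia.
Qed.

Inductive lexpr : Type :=
  | LAtom (k : nat) | LZero | LAdd (e1 e2 : lexpr) | LSub (e1 e2 : lexpr)
  | LOpp (e : lexpr) | LScal (s : CC) (e : lexpr).

Fixpoint leval (env : nat -> H) (e : lexpr) : H :=
  match e with
  | LAtom k => env k
  | LZero => hzero
  | LAdd e1 e2 => hadd (leval env e1) (leval env e2)
  | LSub e1 e2 => hsub (leval env e1) (leval env e2)
  | LOpp e => hopp (leval env e)
  | LScal s e => hscal s (leval env e)
  end.

Fixpoint lcoef (e : lexpr) (i : nat) : CC :=
  match e with
  | LAtom k => if Nat.eqb i k then Cone else Czero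
  | LZero => Czero
  | LAdd e1 e2 => Cadd (lcoef e1 i) (lcoef e2 i)
  | LSub e1 e2 => Csub (lcoef e1 i) (lcoef e2 i)
  | LOpp e => Copp (lcoef e i)
  | LScal s e => Cmul s (lcoef e i)
  end.

Fixpoint atoms_below (n : nat) (e : lexpr) : Prop :=
  match e with
  | LAtom k => (k < n)%nat
  | LZero => True
  | LAdd e1 e2 | LSub e1 e2 => atoms_below n e1 /\ atoms_below n e2
  | LOpp e | LScal _ e => atoms_below n e
  end.

Lemma leval_lincomb n env e : atoms_below n e -> leval env e = lincomb n (lcoef e) env.
Proof.
  induction e; simpl; intro Hb.
  - now apply lincomb_atom.
  - now rewrite lincomb_zero.
  - destruct Hb; rewrite IHe1, IHe2, lincomb_add; auto.
  - destruct Hb; unfold hsub; rewrite IHe1, IHe2, lincomb_opp, lincomb_add; auto.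
  - rewrite IHe, lincomb_opp; auto.
  - rewrite IHe, lincomb_scal; auto.
Qed.

Lemma leval_eq n env e1 e2 :
  atoms_below n e1 -> atoms_below n e2 -> (forall i, lcoef e1 i = lcoef e2 i) ->
  leval env e1 = leval env e2.
Proof.
  intros B1 B2 E; rewrite !(leval_lincomb n); auto.
  apply lincomb_ext; auto.
Qed.
End VectorAlgebra.

(** Reification for [hlin]: collect the atoms of both sides into a list, then
    translate each side into an [lexpr] indexed by positions in that list. *)
Ltac add_atom t l :=
  lazymatch l with
  | nil => constr:(cons t nil)
  | cons t _ => l
  | cons ?x ?l' => let l'' := add_atom t l' in constr:(cons x l'')
  end.

Ltac collect_atoms t l :=
  lazymatch t with
  | hadd ?a ?b => let l := collect_atoms a l in collect_atoms b l
  | hsub ?a ?b => let l := collect_atoms a l in collect_atoms b l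
  | hopp ?a => collect_atoms a l
  | hscal _ ?a => collect_atoms a l
  | hzero => l
  | _ => add_atom t l
  end.

Ltac atom_index t l :=
  lazymatch l with
  | cons t _ => constr:(O)
  | cons _ ?l' => let k := atom_index t l' in constr:(S k)
  end.

Ltac reify t l :=
  lazymatch t with
  | hadd ?a ?b => let ra := reify a l in let rb := reify b l in constr:(LAdd ra rb)
  | hsub ?a ?b => let ra := reify a l in let rb := reify b l in constr:(LSub ra rb)
  | hopp ?a => let ra := reify a l in constr:(LOpp ra)
  | hscal ?s ?a => let ra := reify a l in constr:(LScal s ra)
  | hzero => constr:(LZero)
  | _ => let k := atom_index t l in constr:(LAtom k)
  end.

(** Compare the coefficients at every index [i]: split [i] until all
    index tests compute, then check the complex identity. *)
Ltac coef_solve i := first [cring | destruct i as [|i]; coef_solve i].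

(** [hlin] proves identities between linear combinations of vectors. *)
Ltac hlin :=
  lazymatch goal with
  | |- @eq (hcar ?HS) ?lhs ?rhs =>
    let l := collect_atoms lhs (@nil (hcar HS)) in
    let l := collect_atoms rhs l in
    let el := reify lhs l in
    let er := reify rhs l in
    change (leval HS (fun k => nth k l hzero) el = leval HS (fun k => nth k l hzero) er);
    apply (leval_eq HS (length l)); [cbn; repeat split; lia | cbn; repeat split; lia |
      let i := fresh "i" in intro i; coef_solve i]
  end.

Lemma hsub_solve (H : HilbertSpace) (x y z : H) : hsub x y = z -> x = hadd z y.
Proof. intros <-; hlin. Qed.

Section ResolventBasics.
Variables (H : HilbertSpace) (T : Op H) (l : CC).
Hypothesis Rl : in_resolvent_set T l.

Lemma res_spec h : op_dom T (resolvent T l h) /\ shift T l (resolvent T l h) = h.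
Proof. destruct Rl as [_ [Hs _]]; unfold resolvent; apply epsilon_spec, Hs. Qed.

Lemma res_unique x h : op_dom T x -> shift T l x = h -> resolvent T l h = x.
Proof.
  intros Dx Sx; destruct (res_spec h) as [D1 S1], Rl as [Hinj _].
  apply Hinj; auto; now rewrite S1, Sx.
Qed.

Lemma res_shift x : op_dom T x -> resolvent T l (shift T l x) = x.
Proof. intros; now apply res_unique. Qed.
End ResolventBasics.

Section LinearOperator.
Variables (H : HilbertSpace) (T : Op H).
Hypothesis LT : is_linear_op T.

Lemma dom_add x y : op_dom T x -> op_dom T y -> op_dom T (hadd x y).
Proof. destruct LT as [[_ [D _]] _]; apply D. Qed.

Lemma dom_scal a x : op_dom T x -> op_dom T (hscal a x).
Proof. destruct LT as [[_ [_ D]] _]; apply D. Qed.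

Lemma dom_sub x y : op_dom T x -> op_dom T y -> op_dom T (hsub x y).
Proof.
  intros Dx Dy; unfold hsub; rewrite hopp_scal; apply dom_add; auto.
  now apply dom_scal.
Qed.

Lemma dom_unscale q x :
  Cmul (Cconj q) q = Cone -> op_dom T (hscal q x) -> op_dom T x.
Proof.
  intros Hq D; replace x with (hscal (Cconj q) (hscal q x)).
  - now apply dom_scal.
  - now rewrite hscal_assoc, Hq, hscal_one.
Qed.

Lemma app_add x y :
  op_dom T x -> op_dom T y -> op_app T (hadd x y) = hadd (op_app T x) (op_app T y).
Proof. destruct LT as [_ [Ap _]]; apply Ap. Qed.

Lemma app_scal a x : op_dom T x -> op_app T (hscal a x) = hscal a (op_app T x).
Proof. destruct LT as [_ [_ Ap]]; apply Ap. Qed.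

Lemma app_sub x y :
  op_dom T x -> op_dom T y -> op_app T (hsub x y) = hsub (op_app T x) (op_app T y).
Proof.
  intros Dx Dy; unfold hsub; rewrite !hopp_scal, app_add, app_scal; auto.
  now apply dom_scal.
Qed.

Lemma shift_add l x y :
  op_dom T x -> op_dom T y -> shift T l (hadd x y) = hadd (shift T l x) (shift T l y).
Proof. intros Dx Dy; unfold shift; rewrite app_add; auto; hlin. Qed.

Lemma shift_scal l a x : op_dom T x -> shift T l (hscal a x) = hscal a (shift T l x).
Proof. intros Dx; unfold shift; rewrite app_scal; auto; hlin. Qed.

Lemma shift_zero l : shift T l hzero = hzero.
Proof.
  destruct LT as [[D0 _] _].
  rewrite <- (hscal_zero H hzero), shift_scal, !hscal_zero; [reflexivity | exact D0].
Qed.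

Lemma shift_image_subspace l (D : H -> Prop) :
  is_subspace D -> (forall f, D f -> op_dom T f) ->
  is_subspace (fun g => exists f, D f /\ g = shift T l f).
Proof.
  intros [D0 [Dadd Dscal]] DT; split; [|split].
  - exists hzero; split; [exact D0 | now rewrite shift_zero].
  - intros x y [f1 [D1 ->]] [f2 [D2 ->]]; exists (hadd f1 f2).
    split; [auto | now rewrite shift_add; auto].
  - intros a x [f [Df ->]]; exists (hscal a f).
    split; [auto | now rewrite shift_scal; auto].
Qed.

Section Resolvent.
Variable l : CC.
Hypothesis Rl : in_resolvent_set T l.

Lemma res_add x y :
  resolvent T l (hadd x y) = hadd (resolvent T l x) (resolvent T l y).
Proof.
  destruct (res_spec _ _ _ Rl x) as [Dx Sx], (res_spec _ _ _ Rl y) as [Dy Sy].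
  apply (res_unique _ _ _ Rl); [now apply dom_add | now rewrite shift_add, Sx, Sy].
Qed.

Lemma res_scal a x : resolvent T l (hscal a x) = hscal a (resolvent T l x).
Proof.
  destruct (res_spec _ _ _ Rl x) as [Dx Sx].
  apply (res_unique _ _ _ Rl); [now apply dom_scal | now rewrite shift_scal, Sx].
Qed.

Lemma res_sub x y :
  resolvent T l (hsub x y) = hsub (resolvent T l x) (resolvent T l y).
Proof. unfold hsub; rewrite !hopp_scal, res_add, res_scal; reflexivity. Qed.
End Resolvent.

Lemma resolvent_identity l l' g : in_resolvent_set T l -> in_resolvent_set T l' ->
  resolvent T l g =
  hadd (resolvent T l' g) (hscal (Csub l l') (resolvent T l (resolvent T l' g))).
Proof.
  intros Rl Rl'.
  destruct (res_spec _ _ _ Rl' g) as [Df Sf].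
  destruct (res_spec _ _ _ Rl (resolvent T l' g)) as [Dk Sk].
  apply (res_unique _ _ _ Rl); [apply dom_add; [|apply dom_scal]; auto|].
  rewrite shift_add, shift_scal, Sk; auto; [|now apply dom_scal].
  revert Sf; unfold shift; intros Sf%hsub_solve; rewrite Sf; hlin.
Qed.
End LinearOperator.

Lemma unimodular_conj_mul q : Cabs q = 1 -> Cmul (Cconj q) q = Cone.
Proof.
  unfold Cabs; intro E.
  assert (Hs : Re q * Re q + Im q * Im q = 1).
  { rewrite <- (sqrt_sqrt (Re q * Re q + Im q * Im q)); [rewrite E; ring | nra]. }
  apply Ceq; simpl; nra.
Qed.

Section QCommutation.
Variables (H : HilbertSpace) (q lam mu : CC) (A B : Op H).
Hypotheses (LA : is_linear_op A) (LB : is_linear_op B).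
Hypotheses (RA : in_resolvent_set A lam) (RAq : in_resolvent_set A (Cmul lam q)).
Hypotheses (RB : in_resolvent_set B mu) (RBq : in_resolvent_set B (Cmul mu q)).
Hypothesis q_invertible : Cmul (Cconj q) q = Cone.

Lemma dagger_of_commutation f :
  dom_prod A B f -> dom_prod B A f ->
  op_app A (op_app B f) = hscal q (op_app B (op_app A f)) ->
  op_dom A (shift B (Cmul mu q) f) /\ dagger A B q mu (shift B (Cmul mu q) f).
Proof.
  intros [DBf DABf] [DAf DBAf] Hcomm.
  assert (DAg : op_dom A (shift B (Cmul mu q) f)).
  { apply (dom_sub _ _ LA); [exact DABf | now apply dom_scal]. }
  split; [exact DAg|]; unfold dagger.
  rewrite (res_shift _ _ _ RBq); auto; split; [exact DAf|].
  apply (res_unique _ _ _ RB); [now apply dom_scal|].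
  unfold shift; rewrite (app_scal _ _ LB), (app_sub _ _ LA), (app_scal _ _ LA), Hcomm;
    auto; [hlin | now apply dom_scal].
Qed.

(** Here [Bf = g + mu q f] lies in [D(A)], and [(dagger)] says [q Af = R_mu(B) Ag],
    so [Af] lies in [D(B)] and [q BAf = Ag + mu q Af = ABf]. *)
Lemma commutation_of_dagger g :
  op_dom A g -> dagger A B q mu g ->
  let f := resolvent B (Cmul mu q) g in
  dom_prod A B f /\ dom_prod B A f /\
  op_app A (op_app B f) = hscal q (op_app B (op_app A f)).
Proof.
  intros DAg [DAf Hd]; cbv zeta.
  destruct (res_spec _ _ _ RBq g) as [DBf Sf%hsub_solve].
  set (f := resolvent B (Cmul mu q) g) in *.
  destruct (res_spec _ _ _ RB (op_app A g)) as [_ SAg]; rewrite Hd in SAg.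
  assert (DBqAf : op_dom B (hscal q (op_app A f))).
  { rewrite <- Hd; apply (res_spec _ _ _ RB). }
  assert (DBAf : op_dom B (op_app A f)) by exact (dom_unscale _ _ LB q _ q_invertible DBqAf).
  split; [|split]; [split; auto | split; auto |].
  - rewrite Sf; apply (dom_add _ _ LA); [exact DAg | now apply dom_scal].
  - rewrite Sf, (app_add _ _ LA), (app_scal _ _ LA); auto; [|now apply dom_scal].
    rewrite <- (app_scal _ _ LB q (op_app A f)); auto.
    unfold shift in SAg; apply hsub_solve in SAg; rewrite SAg; hlin.
Qed.

(** The right side of [(ddagger)] lies in [D(A)] and, by [(dagger)] and the
    resolvent identity for [B], is mapped by [A - lam I] to [R_mu(B) h]. *)
Lemma ddagger_of_dagger g :
  op_dom A g -> dagger A B q mu g -> ddagger A B q lam mu (shift A (Cmul lam q) g).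
Proof.
  intros DAg [DAf Hd]; unfold ddagger.
  rewrite (res_shift _ _ _ RAq g DAg).
  pose proof (resolvent_identity _ _ LB _ _ g RB RBq) as Step.
  set (f := resolvent B (Cmul mu q) g) in *.
  set (k := resolvent B mu f) in *.
  destruct (res_spec _ _ _ RA k) as [DAj Sj].
  unfold shift at 1; rewrite (res_sub _ _ LB), (res_scal _ _ LB), Hd, Step; auto.
  apply (res_unique _ _ _ RA); [apply (dom_add _ _ LA); apply (dom_scal _ _ LA); auto|].
  rewrite (shift_add _ _ LA), (shift_scal _ _ LA _ q f), (shift_scal _ _ LA), Sj;
    try apply dom_scal; auto.
  unfold shift; hlin.
Qed.

(** (iv), pointwise: [(ddagger)] at [h] gives [(dagger)] at [g = R_{lam q}(A) h].
    [(ddagger)] writes [q R_{mu q}(B) g] as a combination of two vectors in the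
    range of [R_lam(A)], hence in [D(A)]; applying [A] to it yields [(dagger)]. *)
Lemma dagger_of_ddagger h :
  ddagger A B q lam mu h ->
  let g := resolvent A (Cmul lam q) h in op_dom A g /\ dagger A B q mu g.
Proof.
  intros Hm g; unfold ddagger in Hm.
  destruct (res_spec _ _ _ RAq h) as [DAg Sg%hsub_solve].
  pose proof (resolvent_identity _ _ LB _ _ g RB RBq) as Step.
  fold g in Hm, Sg.
  set (f := resolvent B (Cmul mu q) g) in *.
  set (k := resolvent B mu f) in *.
  destruct (res_spec _ _ _ RA k) as [DAj Sj%hsub_solve].
  set (j := resolvent A lam k) in *.
  destruct (res_spec _ _ _ RA (resolvent B mu h)) as [DAm Sm%hsub_solve].
  set (m := resolvent A lam (resolvent B mu h)) in *.
  set (d := Cmul (Cmul mu lam) (Cmul q (Csub q Cone))) in *.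
  assert (Ef : hscal q f = hsub m (hscal d j)) by (rewrite Hm; hlin).
  assert (DAf : op_dom A f).
  { apply (dom_unscale _ _ LA q _ q_invertible); rewrite Ef.
    apply (dom_sub _ _ LA); [exact DAm | now apply dom_scal]. }
  split; [exact DAg | split; [exact DAf|]].
  rewrite Sg, (res_add _ _ LB), (res_scal _ _ LB), Step; auto; fold f k.
  rewrite <- (app_scal _ _ LA q f), Ef, (app_sub _ _ LA), (app_scal _ _ LA); auto;
    [|now apply dom_scal].
  rewrite Sm, Sj, Hm; hlin.
Qed.
End QCommutation.

Theorem mainTheorem2 (H : HilbertSpace) (q lam mu : CC) (A B : Op H) :
  Cabs q = 1 -> Cmul q q <> Cone ->
  self_adjoint A -> self_adjoint B ->
  in_resolvent_set A lam -> in_resolvent_set A (Cmul lam q) ->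
  in_resolvent_set B mu -> in_resolvent_set B (Cmul mu q) ->
  (* (i) *)
  (forall D : H -> Prop,
     is_subspace D ->
     (forall f, D f -> dom_prod A B f /\ dom_prod B A f) ->
     (forall f, D f -> op_app A (op_app B f) = hscal q (op_app B (op_app A f))) ->
     let E := fun g => exists f, D f /\ g = shift B (Cmul mu q) f in
     is_subspace E /\ (forall g, E g -> op_dom A g) /\
     (forall g, E g -> dagger A B q mu g)) /\
  (* (ii) *)
  (forall E : H -> Prop,
     is_subspace E -> (forall g, E g -> op_dom A g) ->
     (forall g, E g -> dagger A B q mu g) ->
     let D := fun f => exists g, E g /\ f = resolvent B (Cmul mu q) g in
     forall f, D f ->
       dom_prod A B f /\ dom_prod B A f /\
       op_app A (op_app B f) = hscal q (op_app B (op_app A f))) /\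
  (* (iii) *)
  (forall E : H -> Prop,
     is_subspace E -> (forall g, E g -> op_dom A g) ->
     (forall g, E g -> dagger A B q mu g) ->
     let F := fun h => exists g, E g /\ h = shift A (Cmul lam q) g in
     forall h, F h -> ddagger A B q lam mu h) /\
  (* (iv) *)
  (forall F : H -> Prop,
     is_subspace F ->
     (forall h, F h -> ddagger A B q lam mu h) ->
     let E := fun g => exists h, F h /\ g = resolvent A (Cmul lam q) h in
     forall g, E g -> op_dom A g /\ dagger A B q mu g).
Proof.
  intros Hq _ [LA _] [LB _] RA RAq RB RBq.
  pose proof (unimodular_conj_mul q Hq) as q_inv.
  split; [|split; [|split]].
  - intros D HD Hdom Hcomm; cbv zeta.
    assert (Hi : forall f, D f ->
      op_dom A (shift B (Cmul mu q) f) /\ dagger A B q mu (shift B (Cmul mu q) f)).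
    { intros f Df; destruct (Hdom f Df); apply dagger_of_commutation; auto. }
    split; [|split].
    + apply (shift_image_subspace _ _ LB); [exact HD | intros f Df; apply (Hdom f Df)].
    + intros g [f [Df ->]]; apply (Hi f Df).
    + intros g [f [Df ->]]; apply (Hi f Df).
  - intros E _ HEA Hdag; cbv zeta; intros f [g [Eg ->]].
    apply commutation_of_dagger; auto.
  - intros E _ HEA Hdag; cbv zeta; intros h [g [Eg ->]].
    apply ddagger_of_dagger; auto.
  - intros F _ Hdd; cbv zeta; intros g [h [Fh ->]].
    apply dagger_of_ddagger; auto.
Qed.
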